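(* Let $G$ be a finite simple forest with $\operatorname{mat}(G)\geq 2$, let $x$ be a distant leaf of $G$ with neighbor $y$. Then for any $2\leq k\leq\operatorname{mat}(G)$, \[\operatorname{aim}(G-\{x,y\},k-1)+1\leq\operatorname{aim}(G,k).\]
   Context: A leaf is a vertex of degree $1$; a leaf $x$ with unique neighbor $y$ is a distant leaf if $y$ has at most one neighbor of degree greater than $1$. $G-U$ is the induced subgraph on $V(G)\setminus U$. $\operatorname{mat}$ is the matching number. Two edges form a gap if they are disjoint and no edge of the graph joins a vertex of one to a vertex of the other. A sequence $(a_1,\dots,a_n)$ of integers is $k$-admissable if $a_i\ge1$ and $\sum a_i\le n+k-1$. For a graph $H$ and $1\le k\le\operatorname{mat}(H)$, a matching $M$ of $H$ is $k$-admissable if there are nonempty pairwise disjoint $M_1,\dots,M_r\subseteq M$ with union $M$ such that edges from different $M_i$'s always form a gap in $H$, $(|M_1|,\dots,|M_r|)$ is $k$-admissable, and the induced subgraph of $H$ on $\bigcup_{e\in M_i}e$ is a forest for each $i$. $\operatorname{aim}(H,k)$ is the maximum size of a $k$-admissable matching of $H$ ($0$ if none). *)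

From Stdlib Require Import ClassicalEpsilon.
From mathcomp Require Import all_boot.
Set Implicit Arguments. Unset Strict Implicit. Unset Printing Implicit Defensive.

(* A finite simple graph: vertex set V : {set T} inside a finType T,
   adjacency adj : rel T assumed symmetric and irreflexive (only its
   restriction to V matters).  Induced subgraphs G - U are (V :\: U, adj). *)
Section Graphs.
Variable T : finType.
Implicit Types (V W : {set T}) (adj : rel T).

Definition simple_rel adj := symmetric adj /\ irreflexive adj.

Definition is_edge V adj (f : {set T}) : bool :=
  [exists x in V, exists y in V, adj x y && (f == [set x; y])].

Definition is_matching V adj (M : {set {set T}}) : bool :=
  [forall f in M, is_edge V adj f] &&
  [forall f in M, forall g in M, (f != g) ==> [disjoint f & g]].

Definition mat V adj : nat :=
  \max_(M : {set {set T}} | is_matching V adj M) #|M|.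

Definition degree V adj (v : T) : nat := #|[set u in V | adj v u]|.

Definition has_cycle W adj : Prop :=
  exists s : seq T, [/\ 3 <= size s, uniq s, all (mem W) s & cycle adj s].

Definition forest W adj : Prop := ~ has_cycle W adj.

Definition gap adj (f g : {set T}) : bool :=
  [disjoint f & g] && [forall u in f, forall v in g, ~~ adj u v].

Definition admissable_seq (k : nat) (a : seq nat) : bool :=
  all (fun ai => 0 < ai) a && (sumn a <= size a + k - 1).

(* k-admissable matching: M is partitioned (finset [partition]: blocks
   nonempty, pairwise disjoint, union M) into blocks M_1..M_r such that
   edges from different blocks form a gap, the size sequence is
   k-admissable, and each block spans an induced forest. *)
Definition admissable_matching V adj (k : nat) (M : {set {set T}}) : Prop :=
  is_matching V adj M /\
  exists P : {set {set {set T}}},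
    [/\ partition P M,
        (forall Mi Mj, Mi \in P -> Mj \in P -> Mi != Mj ->
           forall f g, f \in Mi -> g \in Mj -> gap adj f g),
        admissable_seq k [seq #|(Mi : {set {set T}})| | Mi <- enum P]
      & (forall Mi, Mi \in P -> forest (cover Mi) adj)].

Definition aim V adj (k : nat) : nat :=
  \max_(M : {set {set T}} | (if excluded_middle_informative (admissable_matching V adj k M)
                 then true else false)) #|M|.

Definition distant_leaf V adj (x y : T) : Prop :=
  [/\ x \in V, y \in V, [set u in V | adj x u] = [set y]
    & #|[set u in V | adj y u & 1 < degree V adj u]| <= 1].

End Graphs.

From mathcomp Require Import all_boot.
From Stdlib Require Import ClassicalEpsilon.
Set Implicit Arguments. Unset Strict Implicit. Unset Printing Implicit Defensive.

(* Take a (k-1)-admissable matching M of G - {x, y} with its block partition.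
   As x is a leaf, an edge of M can fail to form a gap with xy only through a
   neighbour v of y covered by M; such a v has degree at least 2, so, y having
   at most one such neighbour, at most one edge of M fails to form a gap with
   xy.  Adding xy to the block of that edge (or as a new block if there is
   none) gives a partition of M + xy with no fewer blocks, so its size sequence
   is k-admissable, and every block still spans a forest since G is one. *)

Section Partitions.
Variable U : finType.
Implicit Types (D B : {set U}) (P : {set {set U}}).

Lemma partition_setU1_block P D a B0 :
  partition P D -> a \notin D -> B0 \in set0 |: P ->
  partition ((a |: B0) |: (P :\ B0)) (a |: D).
Proof.
have aB_neq0 B : a |: B != set0 by apply/set0Pn; exists a; rewrite setU11.
move=> pP aD /setU1P[->|B0P].
  have -> : P :\ set0 = P.
    by apply/setDidPl; rewrite disjoint_sym disjoints1 (partition0 pP).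
  by rewrite -{2}(setU0 [set a]) partitionU1 // setU0 disjoints1.
rewrite -(setID D B0) (setIidPr (partitionS pP B0P)) setUA.
apply: partitionU1; rewrite ?partitionD1 //.
rewrite -setI_eq0; apply/eqP/setP => u; rewrite !inE.
by case: (u =P a) => [->|_]; [rewrite (negbTE aD) andbF | case: (u \in B0)].
Qed.

Lemma leq_card_partition_setU1_block P D a B0 :
  partition P D -> a \notin D -> #|P| <= #|(a |: B0) |: (P :\ B0)|.
Proof.
move=> pP aD; rewrite cardsU1 (cardsD1 B0 P) leq_add2r.
have aB0P : a |: B0 \notin P.
  by apply: contra aD => /(partitionS pP) /subsetP; apply; rewrite setU11.
by rewrite in_setD1 (negPf aB0P) andbF leq_b1.
Qed.

Lemma partition_le1_block P D (p : pred U) :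
  partition P D -> #|[set u in D | p u]| <= 1 ->
  exists2 B0, B0 \in set0 |: P &
    forall B u, B \in P -> B != B0 -> u \in B -> ~~ p u.
Proof.
move=> pP le1; have uD B u : B \in P -> u \in B -> u \in D.
  by move=> BP; apply/subsetP/(partitionS pP BP).
case: (pickP [pred u in D | p u]) => [u0 /andP[u0D pu0] | none].
  exists (pblock P u0); first by rewrite setU1r // pblock_mem ?(cover_partition pP).
  move=> B u BP + uB; apply: contraNN => pu.
  have -> : u0 = u by apply: (card_le1_eqP le1); rewrite inE ?u0D ?pu0 ?(uD B).
  by rewrite (def_pblock (partition_trivIset pP) BP uB).
exists set0 => [|B u BP _ uB]; first exact: setU11.
by have := none u; rewrite /= (uD B) //= => ->.
Qed.

End Partitions.

Section Graphs.
Variable T : finType.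
Implicit Types (V W : {set T}) (adj : rel T) (e f g : {set T}) (M : {set {set T}}).

Lemma is_edge_sub V adj f : is_edge V adj f -> f \subset V.
Proof.
case/exists_inP => u uV /exists_inP[v vV /andP[_ /eqP->]].
by apply/subsetP => w /set2P[]->.
Qed.

Lemma is_edgeS W V adj f : W \subset V -> is_edge W adj f -> is_edge V adj f.
Proof.
move=> /subsetP sWV /exists_inP[u uW /exists_inP[v vW uv_f]].
by apply/exists_inP; exists u; rewrite ?sWV //; apply/exists_inP; exists v; rewrite ?sWV.
Qed.

Lemma is_edge_neq0 V adj f : is_edge V adj f -> f != set0.
Proof.
case/exists_inP => u _ /exists_inP[v _ /andP[_ /eqP->]].
by apply/set0Pn; exists u; rewrite set21.
Qed.

Lemma is_edge_neighbour V adj f v :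
  symmetric adj -> is_edge V adj f -> v \in f -> exists2 w, w \in V & adj v w.
Proof.
move=> sym /exists_inP[u uV /exists_inP[w wV /andP[uw /eqP->]]] /set2P[]->.
  by exists w.
by exists u; rewrite // sym.
Qed.

Lemma forestS W V adj : W \subset V -> forest V adj -> forest W adj.
Proof.
move=> /subsetP sWV fV [s [? ? sW ?]]; apply: fV.
by exists s; split => //; apply: sub_all sW => u; apply: sWV.
Qed.

Lemma gap_sym adj f g : symmetric adj -> gap adj f g -> gap adj g f.
Proof.
move=> sym /andP[fg /forall_inP nadj]; rewrite /gap disjoint_sym fg.
apply/forall_inP => u ug; apply/forall_inP => v vf; rewrite sym.
by move/forall_inP: (nadj v vf); apply.
Qed.

Lemma matching_edge_sub W adj M f : is_matching W adj M -> f \in M -> f \subset W.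
Proof. by case/andP => /forall_inP edges _ /edges /is_edge_sub. Qed.

Lemma matching_eq W adj M f g u :
  is_matching W adj M -> f \in M -> g \in M -> u \in f -> u \in g -> f = g.
Proof.
case/andP => _ /forall_inP disj fM gM uf ug; apply: contraTeq ug => fg.
by have /forall_inP/(_ g gM)/implyP/(_ fg)/disjointFr-> := disj f fM.
Qed.

Lemma notin_matching_disjoint V W adj M e :
  is_matching W adj M -> is_edge V adj e -> [disjoint e & W] -> e \notin M.
Proof.
move=> mM /is_edge_neq0 e_neq0 eW; apply: contra e_neq0 => /(matching_edge_sub mM) sub.
by rewrite -(setIidPl sub) (disjoint_setI0 eW).
Qed.

Lemma is_matching_setU1 V W adj M e :
  W \subset V -> is_edge V adj e -> [disjoint e & W] ->
  is_matching W adj M -> is_matching V adj (e |: M).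
Proof.
move=> sWV eE eW mM; have /andP[/forall_inP edges /forall_inP disj] := mM.
have eg g : g \in M -> [disjoint e & g].
  by move=> gM; apply: disjointWr eW; apply: matching_edge_sub mM gM.
apply/andP; split.
  by apply/forall_inP => f /setU1P[->|fM] //; apply: is_edgeS sWV (edges f fM).
apply/forall_inP => f /setU1P[->|fM]; apply/forall_inP => g /setU1P[->|gM];
  rewrite ?eqxx //; apply/implyP => fg.
- exact: eg.
- by rewrite disjoint_sym eg.
- by have /forall_inP/(_ g gM)/implyP := disj f fM; apply.
Qed.

Definition blocks_gap adj (P : {set {set {set T}}}) : Prop :=
  forall Mi Mj, Mi \in P -> Mj \in P -> Mi != Mj ->
    forall f g, f \in Mi -> g \in Mj -> gap adj f g.

Lemma blocks_gap_setU1 adj P e B0 :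
  symmetric adj -> blocks_gap adj P -> B0 \in set0 |: P ->
  (forall B f, B \in P -> B != B0 -> f \in B -> gap adj e f) ->
  blocks_gap adj ((e |: B0) |: (P :\ B0)).
Proof.
move=> sym gP B0P e_gap.
have new_old B f g : B \in P -> B != B0 -> f \in e |: B0 -> g \in B -> gap adj f g.
  move=> BP nB /setU1P[->|fB0] gB; first exact: e_gap gB.
  case/setU1P: B0P fB0 => [->|B0P fB0]; first by rewrite inE.
  by apply: (gP B0 B) => //; rewrite eq_sym.
move=> Mi Mj /setU1P[->|/setD1P[nMi MiP]] /setU1P[->|/setD1P[nMj MjP]] nij f g.
- by rewrite eqxx in nij.
- exact: new_old.
- by move=> fMi gMj; apply: gap_sym; last apply: (new_old Mi).
- exact: gP.
Qed.

Lemma admissable_seq_partition k P M :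
  partition P M ->
  admissable_seq k [seq #|(Mi : {set {set T}})| | Mi <- enum P] = (#|M| <= #|P| + k - 1).
Proof.
move=> pP; rewrite /admissable_seq size_map -cardE (card_partition pP).
rewrite sumnE big_map big_enum all_map [all _ _](_ : _ = true) //.
by apply/allP => B; rewrite mem_enum => BP /=; rewrite card_gt0 (partition_neq0 pP BP).
Qed.

Lemma admissable_matching0 V adj k : admissable_matching V adj k set0.
Proof.
split; first by apply/andP; split; apply/forall_inP => f; rewrite inE.
by exists set0; split; rewrite ?partition_set0 ?enum_set0 // => Mi; rewrite inE.
Qed.

Lemma card_le_aim V adj k M : admissable_matching V adj k M -> #|M| <= aim V adj k.
Proof.
by move=> adm; apply: leq_bigmax_cond; case: excluded_middle_informative.
Qed.

Lemma aim_attained V adj k :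
  exists2 M, admissable_matching V adj k M & #|M| = aim V adj k.
Proof.
pose A : pred {set {set T}} := fun M =>
  if excluded_middle_informative (admissable_matching V adj k M) then true else false.
have A0 : 0 < #|A|.
  apply/card_gt0P; exists set0; rewrite unfold_in /A.
  by case: excluded_middle_informative => // [[]]; apply: admissable_matching0.
have [M AM eq_aim] := eq_bigmax_cond (fun M : {set {set T}} => #|M|) A0.
exists M; last by rewrite /aim eq_aim.
by move: AM; rewrite unfold_in /A; case: excluded_middle_informative.
Qed.

Lemma admissable_matching_setU1 V W adj k M e :
  symmetric adj -> forest V adj -> W \subset V -> is_edge V adj e -> [disjoint e & W] ->
  #|[set f in M | ~~ gap adj e f]| <= 1 ->
  admissable_matching W adj k.+1 M -> admissable_matching V adj k.+2 (e |: M).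
Proof.
move=> sym fV sWV eE eW le1 [mM [P [pP gP adm_seq _]]].
have eM := notin_matching_disjoint mM eE eW.
have [B0 B0P B0_gap] := partition_le1_block pP le1.
have pP' := partition_setU1_block pP eM B0P.
split; first exact: is_matching_setU1 mM.
exists ((e |: B0) |: (P :\ B0)); split => //.
- by apply: blocks_gap_setU1 => // B f BP nB fB; rewrite -[gap _ _ _]negbK (B0_gap B).
- rewrite (admissable_seq_partition _ pP') cardsU1 eM.
  rewrite (admissable_seq_partition _ pP) in adm_seq.
  rewrite addnS subn1 /= add1n addnS ltnS; rewrite addnS subn1 /= in adm_seq.
  by rewrite (leq_trans adm_seq) // leq_add2r (leq_card_partition_setU1_block B0 pP eM).
- move=> B BP; apply: forestS fV; apply/bigcupsP => f fB.
  have /setU1P[->|fM] : f \in e |: M by apply: subsetP fB; apply: partitionS pP' BP.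
    exact: is_edge_sub eE.
  exact: subset_trans (matching_edge_sub mM fM) sWV.
Qed.

Lemma degree_gt1 V adj v u w :
  u \in V -> w \in V -> u != w -> adj v u -> adj v w -> 1 < degree V adj v.
Proof.
move=> uV wV uw vu vw; apply: leq_trans (_ : #|[set u; w]| <= _).
  by rewrite cards2 uw.
by apply/subset_leq_card/subsetP => z /set2P[]->; rewrite inE ?uV ?wV.
Qed.

Lemma distant_leaf_is_edge V adj x y :
  distant_leaf V adj x y -> is_edge V adj [set x; y].
Proof.
case=> xV yV Nx _; have : y \in [set u in V | adj x u] by rewrite Nx set11.
rewrite inE => /andP[_ xy]; apply/exists_inP; exists x; first exact: xV.
by apply/exists_inP; exists y; [exact: yV | rewrite xy eqxx].
Qed.

Lemma distant_leaf_gap_le1 V adj x y M :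
  symmetric adj -> distant_leaf V adj x y -> is_matching (V :\: [set x; y]) adj M ->
  #|[set f in M | ~~ gap adj [set x; y] f]| <= 1.
Proof.
move=> sym [xV yV Nx Sy] mM; set S := [set u in V | adj y u & 1 < degree V adj u].
have meets_S f : f \in M -> ~~ gap adj [set x; y] f -> [exists v in f, v \in S].
  move=> fM; apply: contraR => /exists_inPn notS.
  have fW := matching_edge_sub mM fM.
  have fV v : v \in f -> v \in V by move/(subsetP fW); rewrite inE => /andP[].
  have fxy v : v \in f -> v \notin [set x; y].
    by move/(subsetP fW); rewrite inE => /andP[].
  apply/andP; split.
    by rewrite disjoint_sym disjoints_subset (subset_trans fW) ?subsetDr.
  apply/forall_inP => u /set2P[]->; apply/forall_inP => v vf; apply/negP => uv.
    have : v \in [set u in V | adj x u] by rewrite inE fV.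
    by rewrite Nx => /set1P vy; move: (fxy v vf); rewrite vy set22.
  have /andP[edges _] := mM.
  have [w wW vw] := is_edge_neighbour sym (forall_inP edges f fM) vf.
  move: wW; rewrite inE => /andP[wxy wV].
  have yw : y != w by apply: contraNneq wxy => <-; rewrite set22.
  move/negP: (notS v vf); apply; rewrite inE fV //=.
  by rewrite uv (degree_gt1 yV wV yw) // sym.
apply/card_le1_eqP => f g; rewrite !inE.
move=> /andP[fM /(meets_S f fM)/exists_inP[v vf vS]].
move=> /andP[gM /(meets_S g gM)/exists_inP[w wg wS]].
have vw : w = v by apply: (card_le1_eqP Sy).
by apply: (matching_eq mM gM fM wg); rewrite vw.
Qed.

End Graphs.

Theorem lemma4p5 (T : finType) (V : {set T}) (adj : rel T) (x y : T) (k : nat) :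
  simple_rel adj ->
  forest V adj ->
  2 <= mat V adj ->
  distant_leaf V adj x y ->
  2 <= k -> k <= mat V adj ->
  aim (V :\: [set x; y]) adj k.-1 + 1 <= aim V adj k.
Proof.
move=> [sym _] fV _ leaf; case: k => [|[|k]] // _ _ /=.
have [M [mM admM] <-] := aim_attained (V :\: [set x; y]) adj k.+1.
have xy_edge := distant_leaf_is_edge leaf.
have xy_disj : [disjoint [set x; y] & V :\: [set x; y]].
  by rewrite disjoint_sym disjoints_subset subsetDr.
have adm_xyM : admissable_matching V adj k.+2 ([set x; y] |: M).
  apply: admissable_matching_setU1 (conj mM admM) => //; first exact: subsetDl.
  exact: distant_leaf_gap_le1 leaf mM.
apply: leq_trans (card_le_aim adm_xyM).
by rewrite cardsU1 (notin_matching_disjoint mM xy_edge xy_disj) addnC.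
Qed.
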